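(* Let $\widehat{\mathbf Y}\in\mathbb R^{n\times n}$ be an optimal solution of the SDP, $\epsilon=\|\widehat{\mathbf Y}-\mathbf Y^*\|_1/\|\mathbf Y^*\|_1$, and let $B_1,\dots,B_{k'}$ be the sets output by Step 1 (described in the context) on input $\widehat{\mathbf Y},n,k$. Then there exist a partial matching $\pi'$ between $[k]$ and $[k']$ (an injective map from a subset of $[k]$ into $[k']$) and a universal constant $C>0$ such that \[ \Big|\bigcup_{a:\ \pi'(a)\text{ defined}} C^*_a\cap B_{\pi'(a)}\Big|\ge(1-C\epsilon)n. \]
   Context: Integers $n\ge4$, $k\ge2$, $k\mid n$; points $\mathbf h_1,\dots,\mathbf h_n\in\mathbb R^d$ with ground-truth labels $\sigma^*:[n]\to[k]$ and clusters $C^*_a=\{i:\sigma^*(i)=a\}$, each of size $n/k$. $Y^*_{ij}=\mathbb 1\{\sigma^*(i)=\sigma^*(j)\}$. SDP: $A_{ij}=\|\mathbf h_i-\mathbf h_j\|_2^2$; $\widehat{\mathbf Y}$ minimizes $\langle\mathbf Y,\mathbf A\rangle$ subject to $\mathbf Y\mathbf 1_n=\frac nk\mathbf 1_n$, $\mathbf Y\succeq0$, $\mathrm{diag}(\mathbf Y)=\mathbf 1_n$, $\mathbf Y\ge0$. $\|\cdot\|_1$ is the entrywise $\ell_1$ norm; $\widehat{\mathbf Y}_{u\bullet}$ denotes the $u$-th row. Step 1: set $V=[n]$, $B_0=\emptyset$, $t=0$; while $V\setminus\bigcup_{i\le t}B_i\ne\emptyset$: increase $t$ by one, let $V_t=V\setminus\bigcup_{i<t}B_i$,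 for each $u\in V_t$ let $B(u)=\{w\in V_t:\|\widehat{\mathbf Y}_{u\bullet}-\widehat{\mathbf Y}_{w\bullet}\|_1\le\frac{n}{4k}\}$, let $B_t$ be a set $B(u)$ of maximum cardinality over $u\in V_t$, and if $|B_t|>n/k$ remove arbitrary elements so that $|B_t|=n/k$. The output is $B_1,\dots,B_{k'}$ where $k'$ is the final value of $t$. *)

From HB Require Import structures.
From mathcomp Require Import all_boot all_order all_algebra.
From mathcomp Require Import Rstruct.
From Stdlib Require Rdefinitions.

Set Implicit Arguments.
Unset Strict Implicit.
Unset Printing Implicit Defensive.

Import Order.TTheory GRing.Theory Num.Theory.
Local Open Scope ring_scope.

Notation R := Rdefinitions.R.

Definition l1norm (m n : nat) (M : 'M[R]_(m, n)) : R :=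
  \sum_(i < m) \sum_(j < n) `|M i j|.

Definition mxdot (n : nat) (Y A : 'M[R]_n) : R :=
  \sum_(i < n) \sum_(j < n) Y i j * A i j.

Definition sqdist (d : nat) (x y : 'rV[R]_d) : R :=
  \sum_(l < d) (x 0 l - y 0 l) ^+ 2.

Definition distmx (n d : nat) (h : 'I_n -> 'rV[R]_d) : 'M[R]_n :=
  \matrix_(i, j) sqdist (h i) (h j).

Definition Ystar (n k : nat) (sigma : 'I_n -> 'I_k) : 'M[R]_n :=
  \matrix_(i, j) (sigma i == sigma j)%:R.

Definition cluster (n k : nat) (sigma : 'I_n -> 'I_k) (a : 'I_k) : {set 'I_n} :=
  [set i | sigma i == a].

Definition psd (n : nat) (Y : 'M[R]_n) : Prop :=
  Y^T = Y /\ forall x : 'cV[R]_n, 0 <= (x^T *m Y *m x) 0 0.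

Definition sdp_feasible (n k : nat) (Y : 'M[R]_n) : Prop :=
  [/\ Y *m (const_mx 1 : 'cV[R]_n) = (const_mx (n%:R / k%:R) : 'cV[R]_n),
      psd Y,
      (forall i, Y i i = 1)
    & (forall i j, 0 <= Y i j)].

Definition sdp_optimal (n k d : nat) (h : 'I_n -> 'rV[R]_d) (Y : 'M[R]_n) : Prop :=
  sdp_feasible k Y /\
  forall Y' : 'M[R]_n, sdp_feasible k Y' -> mxdot Y (distmx h) <= mxdot Y' (distmx h).

Definition rowdist (n : nat) (Y : 'M[R]_n) (u w : 'I_n) : R :=
  \sum_(j < n) `|Y u j - Y w j|.

(* V_t = V \ (B_1 u ... u B_{t-1}), with 0-based index t. *)
Definition remaining (n : nat) (Bs : seq {set 'I_n}) (t : nat) : {set 'I_n} :=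
  ~: \bigcup_(s < t) nth set0 Bs s.

Definition ball (n k : nat) (Y : 'M[R]_n) (V : {set 'I_n}) (u : 'I_n) : {set 'I_n} :=
  [set w in V | rowdist Y u w <= n%:R / (4 * k%:R)].

(* Bs = [B_1; ...; B_k'] is a possible output of Step 1 on input (Y, n, k)
   (Step 1 is nondeterministic: ties in the argmax and the removal of
   arbitrary elements). *)
Definition step1_output (n k : nat) (Y : 'M[R]_n) (Bs : seq {set 'I_n}) : Prop :=
  (forall t, (t < size Bs)%N ->
     let V := remaining Bs t in
     exists2 u, u \in V &
       [/\ forall u', u' \in V -> (#|ball k Y V u'| <= #|ball k Y V u|)%N,
           nth set0 Bs t \subset ball k Y V u,
           (#|ball k Y V u| <= n %/ k)%N -> nth set0 Bs t = ball k Y V u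
         & (n %/ k < #|ball k Y V u|)%N -> #|nth set0 Bs t| = (n %/ k)%N])
  /\ remaining Bs (size Bs) = set0.

Definition matched_overlap (n k : nat) (sigma : 'I_n -> 'I_k)
    (Bs : seq {set 'I_n}) (pi : 'I_k -> option 'I_(size Bs)) : {set 'I_n} :=
  \bigcup_(a < k)
    match pi a with
    | Some j => cluster sigma a :&: nth set0 Bs j
    | None => set0
    end.

Definition partial_matching (k k' : nat) (pi : 'I_k -> option 'I_k') : Prop :=
  forall a b j, pi a = Some j -> pi b = Some j -> a = b.

(** Call a row of [Yhat] good when its l1 distance to the same row of [Y*]
    is at most [n/(8k)].  Good rows of one cluster are then [n/(4k)]-close,
    while good rows of different clusters cannot lie in a common ball of
    radius [n/(4k)], because rows of [Y*] from different clusters are [n/k]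
    apart.  Hence a block of Step 1 meets the good rows of at most one
    cluster, and a block meeting the good part of a cluster before any of it
    was removed is, being a largest ball truncated to [n/k] points, at least
    as large as that good part.  Matching each cluster to such a block, the
    good part of the cluster is bounded by its overlap with the block plus
    the bad rows of the block, so the total overlap misses at most twice the
    number of bad rows.  By Markov's inequality there are at most [8 eps n]
    bad rows, since [||Y*||_1 = n^2/k]. *)
From HB Require Import structures.
From mathcomp Require Import all_boot all_order all_algebra.
From mathcomp Require Import Rstruct.
From mathcomp Require Import zify ring lra.

Set Implicit Arguments.
Unset Strict Implicit.
Unset Printing Implicit Defensive.

Import Order.TTheory GRing.Theory Num.Theory.
Local Open Scope ring_scope.

Lemma card_bigcup_disjoint (I T : finType) (F : I -> {set T}) :
  (forall i j x, x \in F i -> x \in F j -> i = j) ->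
  #|\bigcup_i F i| = (\sum_i #|F i|)%N.
Proof.
move=> memF_inj.
have disjF i j : i != j -> [disjoint F i & F j].
  move=> ij; apply/pred0P => x /=; apply/negbTE/negP => /andP[xi xj].
  by rewrite (memF_inj _ _ _ xi xj) eqxx in ij.
rewrite -sum1_card (partition_disjoint_bigcup _ _ disjF).
by apply: eq_bigr => i _; rewrite sum1_card.
Qed.

Lemma card_gt_mul_le_sum (T : finType) (f : T -> R) (t : R) :
  (forall x, 0 <= f x) -> #|[set x | t < f x]|%:R * t <= \sum_x f x.
Proof.
move=> f_ge0; rewrite mulr_natl -sumr_const.
apply: (@le_trans _ _ (\sum_(x in [set x | t < f x]) f x)).
  by apply: ler_sum => x; rewrite inE => /ltW.
rewrite [leRHS](bigID (mem [set x | t < f x])) /= lerDl.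
exact: sumr_ge0.
Qed.

Section Step1.

Variables (n k : nat) (Y : 'M[R]_n) (Bs : seq {set 'I_n}).

Local Notation B t := (nth set0 Bs t).
Local Notation radius := (n%:R / (4 * k%:R) : R).

Lemma notin_remaining s t x : (s < t)%N -> x \in B s -> x \notin remaining Bs t.
Proof. by move=> lt_st xBs; rewrite inE negbK; apply/bigcupP; exists (Ordinal lt_st). Qed.

Hypothesis step1 : step1_output k Y Bs.

Lemma step1_block_sub_remaining t : (t < size Bs)%N -> B t \subset remaining Bs t.
Proof.
move=> ht; have [u _ [_ sub_ball _ _]] := step1.1 t ht.
by apply: subset_trans sub_ball _; apply/subsetP => w; rewrite inE => /andP[].
Qed.

Lemma step1_blocks_disjoint s t x :
  (s < size Bs)%N -> (t < size Bs)%N -> x \in B s -> x \in B t -> s = t.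
Proof.
move=> hs ht xBs xBt; case: (ltngtP s t) => // [lt_st | lt_ts].
- by have := notin_remaining lt_st xBs; rewrite (subsetP (step1_block_sub_remaining ht)).
- by have := notin_remaining lt_ts xBt; rewrite (subsetP (step1_block_sub_remaining hs)).
Qed.

Lemma step1_cover x : exists2 t, (t < size Bs)%N & x \in B t.
Proof.
have: x \notin remaining Bs (size Bs) by rewrite step1.2 inE.
by rewrite inE negbK => /bigcupP [[t ht] _ xBt]; exists t.
Qed.

Lemma step1_first_block (S : {set 'I_n}) :
  S != set0 ->
  exists t : 'I_(size Bs), (B t :&: S != set0) && (S \subset remaining Bs t).
Proof.
case/set0Pn=> x xS.
have meets: exists t, (t < size Bs)%N && (B t :&: S != set0).
  have [t ht xBt] := step1_cover x; exists t; rewrite ht; apply/set0Pn.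
  by exists x; rewrite inE xBt.
case: (ex_minnP meets) => t /andP[ht BtS] t_min; exists (Ordinal ht).
rewrite /= BtS; apply/subsetP => y yS; rewrite inE; apply/bigcupP => [[[s hs] _ yBs]].
have: (t <= s)%N.
  by apply: t_min; rewrite (ltn_trans hs ht); apply/set0Pn; exists y; rewrite inE yBs.
by rewrite leqNgt hs.
Qed.

Lemma step1_block_center t :
  (t < size Bs)%N -> exists u, forall y, y \in B t -> rowdist Y u y <= radius.
Proof.
move=> ht; have [u _ [_ sub_ball _ _]] := step1.1 t ht.
by exists u => y /(subsetP sub_ball); rewrite inE => /andP[_ ->].
Qed.

Lemma step1_block_card t (S : {set 'I_n}) x0 :
  (t < size Bs)%N -> x0 \in remaining Bs t ->
  S \subset ball k Y (remaining Bs t) x0 -> (#|S| <= n %/ k)%N ->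
  (#|S| <= #|B t|)%N.
Proof.
move=> ht x0V S_ball S_small; have [u _ [u_max _ small_ball big_ball]] := step1.1 t ht.
have S_le := leq_trans (subset_leq_card S_ball) (u_max _ x0V).
case: (leqP #|ball k Y (remaining Bs t) u| (n %/ k)) => [/small_ball -> // | /big_ball ->].
exact: S_small.
Qed.

Variables (sigma : 'I_n -> 'I_k) (good : {set 'I_n}).

Hypothesis cluster_card : forall a, #|cluster sigma a| = (n %/ k)%N.
Hypothesis good_close : forall g w, g \in good -> w \in good ->
  sigma g = sigma w -> rowdist Y g w <= radius.
Hypothesis good_separated : forall u w1 w2, w1 \in good -> w2 \in good ->
  rowdist Y u w1 <= radius -> rowdist Y u w2 <= radius -> sigma w1 = sigma w2.

Implicit Type a : 'I_k.

Definition good_part a := [set x in good | sigma x == a].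

Definition step1_match a : option 'I_(size Bs) :=
  [pick t : 'I_(size Bs) | (B t :&: good_part a != set0) && (good_part a \subset remaining Bs t)].

Definition matched_block a : {set 'I_n} :=
  if step1_match a is Some t then B t else set0.

Lemma step1_matchP a (t : 'I_(size Bs)) : step1_match a = Some t ->
  (B t :&: good_part a != set0) && (good_part a \subset remaining Bs t).
Proof. by rewrite /step1_match; case: pickP => // t' Pt' [<-]. Qed.

Lemma step1_match_None a : step1_match a = None -> good_part a = set0.
Proof.
rewrite /step1_match; case: pickP => // noP _; apply/eqP; apply: contraT.
by case/step1_first_block => t; rewrite noP.
Qed.

Lemma step1_match_cluster a (t : 'I_(size Bs)) y :
  step1_match a = Some t -> y \in B t -> y \in good -> sigma y = a.
Proof.
case/step1_matchP/andP => /set0Pn [x0]; rewrite !inE => /andP[x0B /andP[x0g /eqP <-]] _.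
have [u u_center] := step1_block_center (ltn_ord t).
by move=> yB yg; apply: good_separated (u_center _ yB) (u_center _ x0B).
Qed.

Lemma step1_match_partial : partial_matching step1_match.
Proof.
move=> a b t ha hb; have /andP[/set0Pn [x]] := step1_matchP ha.
rewrite !inE => /andP[xB /andP[xg /eqP <-]] _.
exact: step1_match_cluster hb xB xg.
Qed.

Lemma card_good_part_le_block a (t : 'I_(size Bs)) :
  step1_match a = Some t -> (#|good_part a| <= #|B t|)%N.
Proof.
move=> hat; have /andP[/set0Pn [x0]] := step1_matchP hat.
rewrite in_setI => /andP[x0B x0G] G_rem.
apply: (step1_block_card (ltn_ord t) (subsetP G_rem _ x0G)).
  apply/subsetP => y yG; rewrite inE (subsetP G_rem _ yG) /=.
  move: x0G yG; rewrite !inE => /andP[x0g /eqP s0] /andP[yg /eqP sy].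
  by apply: good_close; rewrite // s0 sy.
rewrite -(cluster_card a); apply: subset_leq_card; apply/subsetP => y.
by rewrite !inE => /andP[_ ->].
Qed.

Lemma card_good_part_le a :
  (#|good_part a| <= #|cluster sigma a :&: matched_block a| +
                     #|matched_block a :\: good|)%N.
Proof.
rewrite /matched_block; case hat: (step1_match a) => [t|]; last first.
  by rewrite step1_match_None // cards0.
apply: leq_trans (card_good_part_le_block hat) _.
rewrite -(cardsID good (B t)) leq_add2r; apply: subset_leq_card.
apply/subsetP => y; rewrite !inE => /andP[yB yg].
by rewrite yB (step1_match_cluster hat yB yg) eqxx.
Qed.

Lemma card_matched_overlap :
  #|matched_overlap sigma step1_match| =
    (\sum_a #|cluster sigma a :&: matched_block a|)%N.
Proof.
rewrite /matched_overlap (eq_bigr (fun a => cluster sigma a :&: matched_block a)).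
  by apply: card_bigcup_disjoint => a b x; rewrite !inE => /andP[/eqP <- _] /andP[/eqP].
by move=> a _; rewrite /matched_block; case: step1_match => //; rewrite setI0.
Qed.

Lemma sum_card_matched_bad :
  (\sum_a #|matched_block a :\: good| <= #|~: good|)%N.
Proof.
rewrite -card_bigcup_disjoint.
  apply: subset_leq_card; apply/subsetP => x /bigcupP [a _].
  by rewrite !inE => /andP[].
move=> a b x; rewrite /matched_block.
case ha: (step1_match a) => [ta|]; last by rewrite !inE andbF.
case hb: (step1_match b) => [tb|]; last by rewrite !inE andbF.
rewrite !inE => /andP[_ xa] /andP[_ xb].
have tab : ta = tb.
  exact/val_inj/(step1_blocks_disjoint (ltn_ord ta) (ltn_ord tb) xa xb).
by rewrite tab in ha; apply: step1_match_partial ha hb.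
Qed.

Lemma sum_card_good_part : (\sum_a #|good_part a|)%N = #|good|.
Proof.
rewrite -card_bigcup_disjoint; last first.
  by move=> a b x; rewrite !inE => /andP[_ /eqP <-] /andP[_ /eqP].
apply: eq_card => x; apply/bigcupP/idP => [[a _] | xg].
  by rewrite inE => /andP[].
by exists (sigma x); rewrite // inE xg eqxx.
Qed.

Theorem step1_matched_overlap_ge :
  (n <= #|matched_overlap sigma step1_match| + 2 * #|~: good|)%N.
Proof.
have good_le : (#|good| <= #|matched_overlap sigma step1_match| + #|~: good|)%N.
  rewrite -sum_card_good_part card_matched_overlap.
  apply: leq_trans (leq_add (leqnn _) sum_card_matched_bad).
  by rewrite -big_split; apply: leq_sum => a _; apply: card_good_part_le.
have := cardsC good; rewrite card_ord; lia.
Qed.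

End Step1.

Definition rowerr (n : nat) (Y Z : 'M[R]_n) (u : 'I_n) : R :=
  \sum_j `|Y u j - Z u j|.

Section RowDistances.

Variables (n : nat) (Y Z : 'M[R]_n).

Lemma rowerr_ge0 u : 0 <= rowerr Y Z u.
Proof. by apply: sumr_ge0 => j _. Qed.

Lemma rowerrC u : rowerr Y Z u = rowerr Z Y u.
Proof. by apply: eq_bigr => j _; rewrite distrC. Qed.

Lemma l1norm_subr_rowerr : l1norm (Y - Z) = \sum_u rowerr Y Z u.
Proof. by apply: eq_bigr => u _; apply: eq_bigr => j _; rewrite !mxE. Qed.

Lemma rowdistC u w : rowdist Y u w = rowdist Y w u.
Proof. by apply: eq_bigr => j _; rewrite distrC. Qed.

Lemma rowdist_triangle u v w : rowdist Y u w <= rowdist Y u v + rowdist Y v w.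
Proof. by rewrite -big_split; apply: ler_sum => j _; apply: ler_distD. Qed.

Lemma rowdist_le_rowerr u w :
  rowdist Z u w <= rowerr Y Z u + rowdist Y u w + rowerr Y Z w.
Proof.
rewrite /rowdist /rowerr -!big_split; apply: ler_sum => j _ /=.
have := ler_distD (Y u j) (Z u j) (Z w j); have := ler_distD (Y w j) (Y u j) (Z w j).
rewrite (distrC (Z u j) (Y u j)); lra.
Qed.

End RowDistances.

Section GroundTruthRows.

Variables (n k : nat) (sigma : 'I_n -> 'I_k).

Lemma rowdist_Ystar_same u w : sigma u = sigma w -> rowdist (Ystar sigma) u w = 0.
Proof. by move=> suw; apply: big1 => j _; rewrite !mxE suw subrr normr0. Qed.

Hypothesis cluster_card : forall a, #|cluster sigma a| = (n %/ k)%N.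

Lemma rowdist_Ystar_diff u w :
  sigma u != sigma w -> (n %/ k)%:R <= rowdist (Ystar sigma) u w.
Proof.
move=> suw; rewrite -(cluster_card (sigma u)) -sum1_card natr_sum big_mkcond /=.
apply: ler_sum => j _; rewrite !mxE inE.
have [-> | _] := eqVneq (sigma j) (sigma u); last exact: normr_ge0.
by rewrite eq_sym (negbTE suw) subr0 normr1.
Qed.

Lemma l1norm_Ystar : l1norm (Ystar sigma) = (n * (n %/ k))%:R.
Proof.
rewrite /l1norm (eq_bigr (fun _ => (n %/ k)%:R)) => [|u _].
  by rewrite sumr_const card_ord mulnC natrM mulr_natr.
rewrite -(cluster_card (sigma u)) -sum1_card natr_sum [RHS]big_mkcond /=.
by apply: eq_bigr => j _; rewrite !mxE inE eq_sym normr_nat; case: (_ == _).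
Qed.

Variable Y : 'M[R]_n.

Local Notation q := ((n %/ k)%:R : R).
Local Notation err := (rowerr Y (Ystar sigma)).

Lemma rowdist_le_rowerr_Ystar g w : sigma g = sigma w -> rowdist Y g w <= err g + err w.
Proof.
move=> sgw; have := rowdist_le_rowerr (Ystar sigma) Y g w.
by rewrite rowdist_Ystar_same // addr0 !(rowerrC (Ystar sigma)).
Qed.

Lemma sigma_eq_of_common_center u w1 w2 :
  (0 < n %/ k)%N -> err w1 <= q / 8 -> err w2 <= q / 8 ->
  rowdist Y u w1 <= q / 4 -> rowdist Y u w2 <= q / 4 -> sigma w1 = sigma w2.
Proof.
move=> q_gt0 e1 e2 d1 d2; apply/eqP; apply: contraT => /rowdist_Ystar_diff far.
have := rowdist_le_rowerr Y (Ystar sigma) w1 w2.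
have := rowdist_triangle Y w1 u w2; rewrite (rowdistC Y w1 u).
have : 0 < q by rewrite ltr0n.
lra.
Qed.

End GroundTruthRows.

Lemma overlap_lower_bound (n q O b : nat) (D : R) :
  (0 < n)%N -> (0 < q)%N -> (n <= O + 2 * b)%N -> b%:R * (q%:R / 8) <= D ->
  (1 - 16 * (D / (n * q)%:R)) * n%:R <= O%:R.
Proof.
move=> n_gt0 q_gt0; rewrite -(ler_nat R) natrD natrM => nOb bD.
have qR : 0 < q%:R :> R by rewrite ltr0n.
have {bD} bE : b%:R <= 8 * (D / q%:R).
  by rewrite -(ler_pM2r qR) -mulrA mulfVK ?gt_eqF //; lra.
have -> : (1 - 16 * (D / (n * q)%:R)) * n%:R = n%:R - 16 * (D / q%:R).
  by rewrite natrM; field; rewrite !pnatr_eq0 -!lt0n n_gt0 q_gt0.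
lra.
Qed.

Theorem lemma12 :
  exists C : R, 0 < C /\
  forall (n k d : nat) (h : 'I_n -> 'rV[R]_d) (sigma : 'I_n -> 'I_k)
         (Yhat : 'M[R]_n) (Bs : seq {set 'I_n}),
    (4 <= n)%N -> (2 <= k)%N -> (k %| n)%N ->
    (forall a : 'I_k, #|cluster sigma a| = (n %/ k)%N) ->
    sdp_optimal k h Yhat ->
    step1_output k Yhat Bs ->
    let eps := l1norm (Yhat - Ystar sigma) / l1norm (Ystar sigma) in
    exists pi : 'I_k -> option 'I_(size Bs),
      partial_matching pi /\
      (1 - C * eps) * n%:R <= (#|matched_overlap sigma pi|)%:R.
Proof.
exists 16; split; first by rewrite ltr0n.
move=> n k d h sigma Y Bs n_ge4 k_ge2 k_dvd_n cluster_card _ step1 eps.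
set q := (n %/ k)%N.
have n_gt0 : (0 < n)%N by apply: leq_trans n_ge4.
have k_gt0 : (0 < k)%N by apply: ltnW.
have q_gt0 : (0 < q)%N by rewrite divn_gt0 // dvdn_leq.
have radius : n%:R / (4 * k%:R) = q%:R / 4 :> R.
  by rewrite -{1}(divnK k_dvd_n) natrM; field; rewrite pnatr_eq0 -lt0n.
pose good := [set u | rowerr Y (Ystar sigma) u <= q%:R / 8].
have close g w : g \in good -> w \in good -> sigma g = sigma w ->
    rowdist Y g w <= n%:R / (4 * k%:R).
  rewrite !inE radius => gg wg /(rowdist_le_rowerr_Ystar Y); lra.
have separated u w1 w2 : w1 \in good -> w2 \in good ->
    rowdist Y u w1 <= n%:R / (4 * k%:R) -> rowdist Y u w2 <= n%:R / (4 * k%:R) ->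
    sigma w1 = sigma w2.
  by rewrite !inE radius; apply: sigma_eq_of_common_center.
exists (step1_match Bs sigma good); split; first exact: step1_match_partial separated.
have bad_rows : #|~: good|%:R * (q%:R / 8) <= l1norm (Y - Ystar sigma).
  have -> : ~: good = [set u | q%:R / 8 < rowerr Y (Ystar sigma) u].
    by apply/setP => u; rewrite !inE ltNge.
  by rewrite l1norm_subr_rowerr; apply: card_gt_mul_le_sum => u; apply: rowerr_ge0.
rewrite /eps l1norm_Ystar //; apply: overlap_lower_bound bad_rows => //.
exact: step1_matched_overlap_ge close separated.
Qed.
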